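(* For all integers $n,f$ with $1\le f\le n-2$, the wait-free Consensus task $\mathrm{Cons}(f+1,f)$ is not $C$-reducible to the $f$-resilient Consensus task $\mathrm{Cons}(n,f)$.
   Context: Model: a finite set of processes runs an asynchronous algorithm communicating by reliable message passing with unbounded delays and speeds; processes fail only by crashing. Time is $\mathcal T=\mathbb N$; a failure pattern $F$ for $\Pi$ is a nondecreasing map $\mathcal T\to2^\Pi$, $Faulty(F)=\bigcup_tF(t)$. A task $T=(P,f)$ consists of a binary agreement problem $P$ (mapping $(F,\vec V)$, $\vec V\in\{0,1\}^\Pi$, to a nonempty $P(F,\vec V)\subseteq\{0,1\}$) and a resiliency degree $f$. An algorithm solves $T$ if in every run with $|Faulty(F)|\le f$ and initial values $\vec V$: every correct process eventually decides, decisions are irrevocable, no two processes decide differently, and decisions lie in $P(F,\vec V)$. Binary Consensus $\mathrm{Cons}(n,f)=(\mathrm{Cons}_{\Pi},f)$ on $\Pi=\{1,\dots,n\}$: $\mathrm{Cons}_\Pi(F,\vec V)=\{v\}$ if all entries of $\vec V$ equal $v$, and $\{0,1\}$ otherwise. Oracles: for $T=(P,f)$ on process set $\Pi'$, $\mathcal O.T$ is a black box with consultants $\Pi'$; its history is a sequence of successive consultations, in each of which every consultant may submit at most one query in $\{0,1\}$ and the oracle returns a common response $d$ with $d\in P(F,\vec V)$ for every $\vec V$ extending the partial query vector (the oracle may use the whole failure pattern, including future crashes), and every correct querier gets the response whenever at least $|\Pi'|-f$ consultants query; $\mathcal O.T$ is the most general such oracle. $C$-reduction: $T_1\le_C T_2$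 if there is an algorithm solving $T_1$ whose processes, besides message passing, may consult a single oracle $\mathcal O.T_2'$ where $T_2'$ is a renamed copy of $T_2$ whose consultant set contains or is contained in the process set of $T_1$; consultants that are not processes of $T_1$ never query and count as crashed from the start for the oracle. $\le_C$ is transitive. *)

From mathcomp Require Import all_boot.
Set Implicit Arguments.
Unset Strict Implicit.
Unset Printing Implicit Defensive.

Definition failure_pattern (P : finType) (F : nat -> {set P}) : Prop :=
  forall t t', t <= t' -> F t \subset F t'.

Definition correct (P : finType) (F : nat -> {set P}) (p : P) : Prop :=
  forall t, p \notin F t.

Definition at_most_faulty (P : finType) (F : nat -> {set P}) (f : nat) : Prop :=
  exists S : {set P}, #|S| <= f /\ forall t p, p \in F t -> p \in S.

(* A binary agreement problem: (F, V) |-> subset of {0,1}, given as a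
   membership predicate  d \in P(F,V). *)
Definition agreement_problem (P : finType) :=
  (nat -> {set P}) -> (P -> bool) -> bool -> Prop.

(* Binary consensus on the process set P:
   Cons_P(F,V) = {v} if all entries of V equal v, {0,1} otherwise. *)
Definition ConsPb (P : finType) : agreement_problem P :=
  fun F V d => forall v : bool, (forall c, V c = v) -> d = v.

Inductive input (P M : Type) : Type :=
| In_none : input P M
| In_msg : P -> M -> input P M
| In_resp : bool -> input P M.
Arguments In_none {P M}.
Arguments In_msg {P M}.
Arguments In_resp {P M}.

Record algo (P : finType) := Algo {
  a_state : Type;
  a_msg : Type;
  a_init : P -> bool -> a_state;
  a_step : P -> a_state -> input P a_msg ->
           a_state * (seq (P * a_msg) * option bool);
  a_dec : a_state -> option bool
}.
Arguments a_state {P} a.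
Arguments a_msg {P} a.
Arguments a_init {P} a.
Arguments a_step {P} a.
Arguments a_dec {P} a.

Definition schedule (P : finType) (A : algo P) :=
  nat -> option (P * input P (a_msg A)).

Section Runs.
Variables (P : finType) (A : algo P) (V : P -> bool) (s : schedule A).

Fixpoint cfg (t : nat) : P -> a_state A :=
  match t with
  | 0 => fun p => a_init A p (V p)
  | t'.+1 => fun p =>
      match s t' with
      | Some (q, i) => if q == p then (a_step A p (cfg t' p) i).1 else cfg t' p
      | None => cfg t' p
      end
  end.

Definition output (t : nat) : option (P * (seq (P * a_msg A) * option bool)) :=
  match s t with
  | Some (p, i) => Some (p, (a_step A p (cfg t p) i).2)
  | None => None
  end.

(* the j-th message sent at time t: (sender, (destination, content)) *)
Definition sent (t j : nat) : option (P * (P * a_msg A)) :=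
  match output t with
  | Some (p, (ms, _)) => omap (fun x => (p, x)) (onth ms j)
  | None => None
  end.

Definition query (t : nat) : option (P * bool) :=
  match output t with
  | Some (p, (_, Some b)) => Some (p, b)
  | _ => None
  end.

Definition is_query_of (p : P) (t : nat) : bool :=
  if query t is Some (q, _) then q == p else false.

Definition nqueries (p : P) (t : nat) : nat := count (is_query_of p) (iota 0 t).

(* at time t0, p submits query b, and this is p's k-th query (counting from
   0), i.e. its query in the k-th consultation of the oracle *)
Definition queries_in (p : P) (k : nat) (b : bool) (t0 : nat) : Prop :=
  query t0 = Some (p, b) /\ nqueries p t0 = k.

End Runs.

(* The renamed copy of the oracle task has consultant set Q; the map
   emb : P -> option Q identifies processes with consultants (None = the
   process is not a consultant). *)
Definition renaming_ok (P Q : finType) (emb : P -> option Q) : Prop :=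
  (forall p p' c, emb p = Some c -> emb p' = Some c -> p = p') /\
  ((forall p, emb p != None) \/ (forall c, exists p, emb p = Some c)).

(* failure pattern seen by the oracle: consultants that are not processes
   count as crashed from the start. *)
Definition oracle_fp (P Q : finType) (emb : P -> option Q) (F : nat -> {set P})
  : nat -> {set Q} :=
  fun t => [set c | [exists p, (emb p == Some c) && (p \in F t)]
                    || ~~ [exists p, emb p == Some c]].

Definition admissible (P Q : finType) (A : algo P) (emb : P -> option Q)
  (P2 : agreement_problem Q) (f2 : nat)
  (F : nat -> {set P}) (V : P -> bool) (s : schedule A) : Prop :=
  failure_pattern F /\
  (forall t p i, s t = Some (p, i) -> p \notin F t) /\
  (forall p, correct F p -> forall t, exists t' i, t <= t' /\ s t' = Some (p, i)) /\
  (exists mt : nat -> nat * nat,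
     (forall t p q m, s t = Some (p, In_msg q m) ->
        (mt t).1 < t /\ sent V s (mt t).1 (mt t).2 = Some (q, (p, m))) /\
     (forall t1 t2 p1 p2 q1 q2 m1 m2,
        s t1 = Some (p1, In_msg q1 m1) -> s t2 = Some (p2, In_msg q2 m2) ->
        mt t1 = mt t2 -> t1 = t2) /\
     (forall t0 j q p m, sent V s t0 j = Some (q, (p, m)) -> correct F p ->
        exists t, s t = Some (p, In_msg q m) /\ mt t = (t0, j))) /\
  (* the oracle O.(P2,f2): rc t = consultation answered by the response
     received at time t, od k = common response of consultation k *)
  (exists (rc : nat -> nat) (od : nat -> bool),
     (forall t p d, s t = Some (p, In_resp d) ->
        [/\ d = od (rc t),
            exists c, emb p = Some c,
            (exists t0 b, t0 < t /\ queries_in V s p (rc t) b t0) &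
            (forall W : Q -> bool,
               (forall t0 p' c b, t0 < t -> emb p' = Some c ->
                  queries_in V s p' (rc t) b t0 -> W c = b) ->
               P2 (oracle_fp emb F) W (od (rc t)))]) /\
     (forall t1 t2 p d1 d2, s t1 = Some (p, In_resp d1) ->
        s t2 = Some (p, In_resp d2) -> rc t1 = rc t2 -> t1 = t2) /\
     (forall k,
        (exists S : {set Q}, #|Q| - f2 <= #|S| /\
           forall c, c \in S -> exists p b t0, emb p = Some c /\ queries_in V s p k b t0) ->
        forall p c b t0, emb p = Some c -> queries_in V s p k b t0 ->
          correct (oracle_fp emb F) c ->
          exists t d, s t = Some (p, In_resp d) /\ rc t = k)).

Definition solves_with_oracle (P Q : finType) (A : algo P)
  (P1 : agreement_problem P) (f1 : nat)
  (emb : P -> option Q) (P2 : agreement_problem Q) (f2 : nat) : Prop :=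
  forall (F : nat -> {set P}) (V : P -> bool) (s : schedule A),
    at_most_faulty F f1 -> @admissible P Q A emb P2 f2 F V s ->
    [/\
        (forall p, correct F p -> exists t v, a_dec A (cfg V s t p) = Some v),
        (forall p t t' v, t <= t' -> a_dec A (cfg V s t p) = Some v ->
                          a_dec A (cfg V s t' p) = Some v),
        (forall p q t t' v w, a_dec A (cfg V s t p) = Some v ->
                              a_dec A (cfg V s t' q) = Some w -> v = w) &
        (forall p t v, a_dec A (cfg V s t p) = Some v -> P1 F V v)].

Definition C_reducible (P Q : finType) (P1 : agreement_problem P) (f1 : nat)
  (P2 : agreement_problem Q) (f2 : nat) : Prop :=
  exists emb : P -> option Q, renaming_ok emb /\
    exists A : algo P, solves_with_oracle A P1 f1 emb P2 f2.

From mathcomp Require Import all_boot zify.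
From Stdlib Require Import Cantor ClassicalEpsilon.
Set Implicit Arguments.
Unset Strict Implicit.
Unset Printing Implicit Defensive.

(* Take two of the f+1 processes, p and q.  Since n - f >= 2, the oracle may
   stay silent as long as only one consultant queries it.  So p, running alone
   with input 1 while everybody else has crashed, must decide 1 by some time
   T1 without any help from the oracle; likewise q, running alone from T1 on
   with input 0, decides 0 by some T2.  Now glue the two solo runs: p runs alone
   with input 1 until T1 and crashes, then q runs alone, the messages of p being
   delayed until T2.  Only q is correct, so at most f processes fail, yet p
   cannot tell this run from its solo run and q cannot tell it from its own
   solo run up to T2: p decides 1 and q decides 0, violating agreement. *)

(** * Schedules built from a scheduling policy *)

(* [slot u] says which pending event time [u] is devoted to: [(t0, j.+1)] is
   the delivery of the [j]-th message sent at [t0], [(t0, 0)] the oracle's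
   response to the query submitted at [t0]. *)
Definition slot (u : nat) : nat * nat := Cantor.of_nat (Cantor.of_nat u).1.

Lemma slot_infinitely_often (x : nat * nat) (N : nat) :
  exists u, N <= u /\ slot u = x.
Proof.
exists (Cantor.to_nat (Cantor.to_nat x, N)); split.
  by have := Cantor.to_nat_non_decreasing (Cantor.to_nat x) N; lia.
by rewrite /slot !Cantor.cancel_of_to.
Qed.

Definition none_between (Qp : pred nat) (t0 u : nat) : bool :=
  ~~ has Qp (iota t0.+1 (u - t0.+1)).

Lemma eq_none_between (Q1 Q2 : pred nat) t0 u :
  (forall u', t0 < u' < u -> Q1 u' = Q2 u') ->
  none_between Q1 t0 u = none_between Q2 t0 u.
Proof.
move=> eqQ; congr negb; apply: eq_in_has => u'; rewrite mem_iota => lim.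
by apply: eqQ; lia.
Qed.

Lemma none_between_uniq (Qp : pred nat) t0 t1 t2 :
  t0 < t1 -> t0 < t2 -> Qp t1 -> Qp t2 ->
  none_between Qp t0 t1 -> none_between Qp t0 t2 -> t1 = t2.
Proof.
move=> lt1 lt2 Q1 Q2 /hasPn N1 /hasPn N2.
case: (ltngtP t1 t2) => // lt.
  by have /N2/negP : t1 \in iota t0.+1 (t2 - t0.+1) by rewrite mem_iota; lia.
by have /N1/negP : t2 \in iota t0.+1 (t1 - t0.+1) by rewrite mem_iota; lia.
Qed.

Lemma none_between_first (Qp : pred nat) t0 :
  (exists u, t0 < u /\ Qp u) ->
  exists u, [/\ t0 < u, Qp u & none_between Qp t0 u].
Proof.
case=> u0 [lt0 Q0].
have ex : exists u, (t0 < u) && Qp u by exists u0; rewrite lt0 Q0.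
case: (ex_minnP ex) => u /andP [lt Qu] umin.
exists u; split=> //; apply/hasPn => u'; rewrite mem_iota => lim.
by apply/negP => Qu'; have := umin u'; rewrite Qu' andbT; lia.
Qed.

Section Runs.
Variables (P : finType) (A : algo P).

Definition step_of (T : Type) (r : P) (o : option (P * T)) : option T :=
  if o is Some (r', x) then (if r' == r then Some x else None) else None.

Lemma step_of_Some (T : Type) r (o : option (P * T)) x :
  step_of r o = Some x -> o = Some (r, x).
Proof. by case: o => [[r' y]|] //=; case: eqP => // -> [->]. Qed.

Lemma cfg_ext (V : P -> bool) (s1 s2 : schedule A) t :
  (forall u, u < t -> s1 u = s2 u) -> forall p, cfg V s1 t p = cfg V s2 t p.
Proof.
elim: t => [|t IH] eqs p //=.
by rewrite eqs // IH // => u lt; apply: eqs; apply: ltnW.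
Qed.

Lemma output_ext (V : P -> bool) (s1 s2 : schedule A) t :
  (forall u, u <= t -> s1 u = s2 u) -> output V s1 t = output V s2 t.
Proof.
move=> eqs; rewrite /output eqs //; case: (s2 t) => [[p i]|] //.
by rewrite (@cfg_ext V s1 s2) // => u lt; apply: eqs; apply: ltnW.
Qed.

Lemma sent_ext (V : P -> bool) (s1 s2 : schedule A) t j :
  (forall u, u <= t -> s1 u = s2 u) -> sent V s1 t j = sent V s2 t j.
Proof. by move=> eqs; rewrite /sent (output_ext V eqs). Qed.

Lemma query_ext (V : P -> bool) (s1 s2 : schedule A) t :
  (forall u, u <= t -> s1 u = s2 u) -> query V s1 t = query V s2 t.
Proof. by move=> eqs; rewrite /query (output_ext V eqs). Qed.

Lemma sent_step (V : P -> bool) (s : schedule A) t j q x :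
  sent V s t j = Some (q, x) -> exists i, s t = Some (q, i).
Proof.
rewrite /sent /output; case: (s t) => [[p i]|] //.
case: (a_step A p _ i).2 => ms o.
by case: (onth ms j) => //= y [<- _]; exists i.
Qed.

Lemma query_step (V : P -> bool) (s : schedule A) t q b :
  query V s t = Some (q, b) -> exists i, s t = Some (q, i).
Proof.
rewrite /query /output; case: (s t) => [[p i]|] //.
by case: (a_step A p _ i).2 => ms [o|] // [<- _]; exists i.
Qed.

Lemma step_of_sent (V : P -> bool) (s : schedule A) r t j :
  step_of r (sent V s t j) = obind (fun o => onth o.1 j) (step_of r (output V s t)).
Proof.
rewrite /sent; case: (output V s t) => [[p [ms o]]|] //=.
by case E: (onth ms j) => [x|] /=; case: (p == r); rewrite /= ?E.
Qed.

Lemma step_of_query (V : P -> bool) (s : schedule A) r t :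
  step_of r (query V s t) = obind snd (step_of r (output V s t)).
Proof.
by rewrite /query; case: (output V s t) => [[p [ms [b|]]]|] //=; case: eqP.
Qed.

Lemma cfg_step_of_eq (V1 V2 : P -> bool) (s1 s2 : schedule A) r t :
  V1 r = V2 r -> (forall u, u < t -> step_of r (s1 u) = step_of r (s2 u)) ->
  cfg V1 s1 t r = cfg V2 s2 t r.
Proof.
move=> eqV; elim: t => [|t IH] eqs /=; first by rewrite eqV.
have -> : cfg V1 s1 t r = cfg V2 s2 t r by apply: IH => u lt; apply: eqs; apply: ltnW.
have := eqs t (ltnSn t); rewrite /step_of.
case: (s1 t) => [[p1 i1]|]; case: (s2 t) => [[p2 i2]|] //=;
  by do ?case: ifP => _; move=> // [->].
Qed.

Lemma output_step_of_eq (V1 V2 : P -> bool) (s1 s2 : schedule A) r t :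
  V1 r = V2 r -> (forall u, u <= t -> step_of r (s1 u) = step_of r (s2 u)) ->
  step_of r (output V1 s1 t) = step_of r (output V2 s2 t).
Proof.
move=> eqV eqs.
have Ecfg : cfg V1 s1 t r = cfg V2 s2 t r.
  by apply: cfg_step_of_eq => // u lt; apply: eqs; apply: ltnW.
have := eqs t (leqnn t); rewrite /output /step_of.
case: (s1 t) => [[p1 i1]|]; case: (s2 t) => [[p2 i2]|] //=;
  by do ?case: ifP => [/eqP ->|_]; move=> // [->]; rewrite Ecfg.
Qed.

Lemma nqueries_lt (V : P -> bool) (s : schedule A) p a b x :
  query V s a = Some (p, x) -> a < b -> nqueries V s p a < nqueries V s p b.
Proof.
move=> qa lt; rewrite /nqueries (_ : b = a + (b - a).-1.+1); last by lia.
by rewrite iotaD count_cat add0n /= /is_query_of qa eqxx; lia.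
Qed.

Lemma queries_in_uniq (V : P -> bool) (s : schedule A) p k b1 b2 t1 t2 :
  queries_in V s p k b1 t1 -> queries_in V s p k b2 t2 -> t1 = t2.
Proof.
move=> [q1 n1] [q2 n2]; case: (ltngtP t1 t2) => // lt.
  by have := nqueries_lt q1 lt; rewrite n1 n2 ltnn.
by have := nqueries_lt q2 lt; rewrite n1 n2 ltnn.
Qed.

End Runs.

Section Schedule.
Variables (P : finType) (A : algo P) (V : P -> bool) (who : nat -> option P)
  (allowed : nat -> P -> P -> bool) (resp : nat -> bool).

Definition msg_slot (t0 jj : nat) (snd rcv : P) (u : nat) : bool :=
  [&& slot u == (t0, jj), who u == Some rcv & allowed u snd rcv].

Definition resp_slot (t0 : nat) (r : P) (u : nat) : bool :=
  [&& slot u == (t0, 0), who u == Some r & resp u].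

Definition msg_input (u : nat) (r : P) (t0 jj : nat)
  (o : option (P * (P * a_msg A))) : input P (a_msg A) :=
  if o is Some (snd, (rcv, m)) then
    if [&& rcv == r, allowed u snd rcv & none_between (msg_slot t0 jj snd rcv) t0 u]
    then In_msg snd m else In_none
  else In_none.

Definition resp_input (u : nat) (r : P) (t0 : nat) (o : option (P * bool))
  : input P (a_msg A) :=
  if o is Some (r', b) then
    if [&& r' == r, resp u & none_between (resp_slot t0 r') t0 u]
    then In_resp b else In_none
  else In_none.

(* A message, or a response, is delivered at the first time devoted to it at
   which its receiver steps and the policy allows it; hence at most once. *)
Definition sch_input (u : nat) (r : P)
  (sentf : nat -> nat -> option (P * (P * a_msg A)))
  (queryf : nat -> option (P * bool)) : input P (a_msg A) :=
  let: (t0, jj) := slot u in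
  if t0 < u then
    if jj is j.+1 then msg_input u r t0 jj (sentf t0 j)
    else resp_input u r t0 (queryf t0)
  else In_none.

Definition sch_step (u : nat) sentf queryf : option (P * input P (a_msg A)) :=
  if who u is Some r then Some (r, sch_input u r sentf queryf) else None.

Lemma sch_step_ext u sf1 qf1 sf2 qf2 :
  (forall t0 j, t0 < u -> sf1 t0 j = sf2 t0 j) ->
  (forall t0, t0 < u -> qf1 t0 = qf2 t0) ->
  sch_step u sf1 qf1 = sch_step u sf2 qf2.
Proof.
move=> eqsf eqqf; rewrite /sch_step; case: (who u) => // r; rewrite /sch_input.
by case: (slot u) => t0 [|j]; case: ltnP => // lt; rewrite ?eqsf ?eqqf.
Qed.

Fixpoint sch_prefix (k : nat) : seq (option (P * input P (a_msg A))) :=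
  if k is k'.+1 then
    let l := sch_prefix k' in
    let s : schedule A := nth None l in
    rcons l (sch_step k' (sent V s) (query V s))
  else [::].

Lemma size_sch_prefix k : size (sch_prefix k) = k.
Proof. by elim: k => //= k IH; rewrite size_rcons IH. Qed.

Lemma nth_sch_prefix k u :
  u < k -> nth None (sch_prefix k) u = nth None (sch_prefix u.+1) u.
Proof.
elim: k => // k IH; rewrite ltnS leq_eqVlt => /orP [/eqP -> //|lt].
by rewrite /= nth_rcons size_sch_prefix lt IH.
Qed.

Definition sch : schedule A := fun u => nth None (sch_prefix u.+1) u.

Lemma sch_eq u : sch u = sch_step u (sent V sch) (query V sch).
Proof.
rewrite /sch /= nth_rcons size_sch_prefix ltnn eqxx.
have prefix_eq t : t < u -> nth None (sch_prefix u) t = sch t.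
  by move=> lt; rewrite nth_sch_prefix.
apply: sch_step_ext => [t0 j lt|t0 lt]; [apply: sent_ext|apply: query_ext];
  by move=> w le; apply: prefix_eq; apply: leq_ltn_trans le lt.
Qed.

Lemma sch_who u r i : sch u = Some (r, i) -> who u = Some r.
Proof. by rewrite sch_eq /sch_step; case: (who u) => // r' [->]. Qed.

Lemma who_sch u r : who u = Some r -> exists i, sch u = Some (r, i).
Proof. by rewrite sch_eq /sch_step => ->; eexists. Qed.

Lemma step_of_sch u r :
  who u = Some r -> step_of r (sch u) = Some (sch_input u r (sent V sch) (query V sch)).
Proof. by rewrite sch_eq /sch_step => -> /=; rewrite eqxx. Qed.

Lemma step_of_sch_other u r : who u != Some r -> step_of r (sch u) = None.
Proof.
by rewrite sch_eq /sch_step; case: (who u) => // r' /=; case: ifP => // /eqP ->; rewrite eqxx.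
Qed.

Lemma sch_msg t p q m : sch t = Some (p, In_msg q m) ->
  exists t0 j, [/\ slot t = (t0, j.+1), t0 < t, sent V sch t0 j = Some (q, (p, m)),
     msg_slot t0 j.+1 q p t & none_between (msg_slot t0 j.+1 q p) t0 t].
Proof.
rewrite sch_eq /sch_step; case Ew: (who t) => [r|] //= [<-].
rewrite /sch_input; case Es: (slot t) => [t0 [|j]]; case: ltnP => // lt.
  by rewrite /resp_input; case: (query V sch t0) => [[r' b]|] //; case: ifP.
rewrite /msg_input; case Hs: (sent V sch t0 j) => [[snd [rcv m']]|] //.
case: ifP => // /and3P [/eqP Er al Nb] [<- <-]; subst rcv.
by exists t0, j; split; rewrite // /msg_slot Es Ew !eqxx al.
Qed.

Lemma sch_resp t p d : sch t = Some (p, In_resp d) ->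
  exists t0, [/\ slot t = (t0, 0), t0 < t, query V sch t0 = Some (p, d),
     resp_slot t0 p t & none_between (resp_slot t0 p) t0 t].
Proof.
rewrite sch_eq /sch_step; case Ew: (who t) => [r|] //= [<-].
rewrite /sch_input; case Es: (slot t) => [t0 [|j]]; case: ltnP => // lt; last first.
  by rewrite /msg_input; case: (sent V sch t0 j) => [[snd [rcv m']]|] //; case: ifP.
rewrite /resp_input; case Hq: (query V sch t0) => [[r' b]|] //.
case: ifP => // /and3P [/eqP Er rs Nb] [<-]; subst r'.
by exists t0; split; rewrite // /resp_slot Es Ew !eqxx rs.
Qed.

Lemma sch_deliver t0 j q p m : sent V sch t0 j = Some (q, (p, m)) ->
  (exists u, t0 < u /\ msg_slot t0 j.+1 q p u) ->
  exists t, sch t = Some (p, In_msg q m) /\ slot t = (t0, j.+1).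
Proof.
move=> Hs /none_between_first [u [lt Qu Nb]].
move: (Qu) => /and3P [/eqP Es /eqP Ew al].
exists u; split=> //.
by rewrite sch_eq /sch_step Ew /sch_input Es lt /msg_input Hs eqxx al Nb.
Qed.

Lemma sch_respond t0 p b : query V sch t0 = Some (p, b) ->
  (exists u, t0 < u /\ resp_slot t0 p u) ->
  exists t, sch t = Some (p, In_resp b) /\ slot t = (t0, 0).
Proof.
move=> Hq /none_between_first [u [lt Qu Nb]].
move: (Qu) => /and3P [/eqP Es /eqP Ew rs].
exists u; split=> //.
by rewrite sch_eq /sch_step Ew /sch_input Es lt /resp_input Hq eqxx rs Nb.
Qed.

End Schedule.

(** * Indistinguishability *)

Section Indistinguishable.
Variables (P : finType) (A : algo P) (r : P) (T : nat)
  (V1 V2 : P -> bool) (who1 who2 : nat -> option P)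
  (al1 al2 : nat -> P -> P -> bool) (rs1 rs2 : nat -> bool).

Let S1 := sch A V1 who1 al1 rs1.
Let S2 := sch A V2 who2 al2 rs2.

Hypothesis V_r : V1 r = V2 r.
Hypothesis who_r : forall u, u < T -> (who1 u == Some r) = (who2 u == Some r).
Hypothesis al1_r : forall u snd, u < T -> who1 u = Some r -> al1 u snd r = (snd == r).
Hypothesis al2_r : forall u snd, u < T -> who2 u = Some r -> al2 u snd r = (snd == r).
Hypothesis rs_r : forall u, u < T -> who1 u = Some r -> rs1 u = rs2 u.

Lemma who2_r u : u < T -> who1 u = Some r -> who2 u = Some r.
Proof. by move=> lt W1; apply/eqP; rewrite -who_r // W1. Qed.

Lemma msg_slot_eq t0 jj u : u < T ->
  msg_slot who1 al1 t0 jj r r u = msg_slot who2 al2 t0 jj r r u.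
Proof.
move=> lt; rewrite /msg_slot -who_r //.
case: (eqVneq (who1 u) (Some r)) => [W1|] /=; last by rewrite !andbF.
by rewrite al1_r // al2_r ?(who2_r lt W1) // eqxx.
Qed.

Lemma resp_slot_eq t0 u : u < T -> resp_slot who1 rs1 t0 r u = resp_slot who2 rs2 t0 r u.
Proof.
move=> lt; rewrite /resp_slot -who_r //.
by case: (eqVneq (who1 u) (Some r)) => [W1|] /=; rewrite ?rs_r ?andbF.
Qed.

Lemma msg_input_foreign (who : nat -> option P) (al : nat -> P -> P -> bool) u t0 jj
  (o : option (P * (P * a_msg A))) :
  (forall snd, al u snd r = (snd == r)) -> step_of r o = None ->
  msg_input who al u r t0 jj o = In_none.
Proof.
move=> al_r; case: o => [[snd [rcv m]]|] //=.
case: eqP => // ne _; case: eqP => //= ->.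
by rewrite al_r; case: eqP.
Qed.

Lemma msg_input_eq u t0 jj (o1 o2 : option (P * (P * a_msg A))) : u < T -> who1 u = Some r ->
  step_of r o1 = step_of r o2 ->
  msg_input who1 al1 u r t0 jj o1 = msg_input who2 al2 u r t0 jj o2.
Proof.
move=> lt W1; have W2 := who2_r lt W1.
case E1: (step_of r o1) => [[rcv m]|] E2; last first.
  by rewrite !msg_input_foreign // => snd; [rewrite al2_r | rewrite al1_r].
rewrite (step_of_Some E1) (step_of_Some (esym E2)) /=.
case: eqP => //= ->; rewrite al1_r // al2_r // eqxx /=.
by rewrite (@eq_none_between _ (msg_slot who2 al2 t0 jj r r)) // => u' /andP [_ lt'];
  apply: msg_slot_eq; apply: ltn_trans lt.
Qed.

Lemma resp_input_eq u t0 (o1 o2 : option (P * bool)) : u < T -> who1 u = Some r ->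
  step_of r o1 = step_of r o2 ->
  resp_input A who1 rs1 u r t0 o1 = resp_input A who2 rs2 u r t0 o2.
Proof.
move=> lt W1.
have foreign who rs (o : option (P * bool)) :
    step_of r o = None -> resp_input A who rs u r t0 o = In_none.
  by case: o => [[r' b]|] //=; case: eqP.
case E1: (step_of r o1) => [b|] E2; last by rewrite !foreign.
rewrite (step_of_Some E1) (step_of_Some (esym E2)) /= eqxx rs_r //.
by rewrite (@eq_none_between _ (resp_slot who2 rs2 t0 r)) // => u' /andP [_ lt'];
  apply: resp_slot_eq; apply: ltn_trans lt.
Qed.

Lemma sch_step_of_eq u : u < T -> step_of r (S1 u) = step_of r (S2 u).
Proof.
elim/ltn_ind: u => u IH lt.
case: (eqVneq (who1 u) (Some r)) => W1; last first.
  by rewrite !step_of_sch_other // -who_r.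
rewrite !step_of_sch ?(who2_r lt W1) //; congr Some; rewrite /sch_input.
case: (slot u) => t0 jj; case: ltnP => // lt0.
have out : step_of r (output V1 S1 t0) = step_of r (output V2 S2 t0).
  apply: output_step_of_eq => // w le; apply: IH; first exact: leq_ltn_trans le lt0.
  exact: ltn_trans (leq_ltn_trans le lt0) lt.
case: jj => [|j]; [apply: resp_input_eq | apply: msg_input_eq] => //;
  by rewrite ?step_of_query ?step_of_sent out.
Qed.

Lemma sch_cfg_eq : cfg V1 S1 T r = cfg V2 S2 T r.
Proof. exact: cfg_step_of_eq V_r sch_step_of_eq. Qed.

End Indistinguishable.

(** * Admissibility of the built schedules *)

Definition quorum_queried (P Q : finType) (A : algo P) (emb : P -> option Q)
  (f2 : nat) (V : P -> bool) (s : schedule A) (k : nat) : Prop :=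
  exists C : {set Q}, #|Q| - f2 <= #|C| /\
    forall c, c \in C -> exists p b t0, emb p = Some c /\ queries_in V s p k b t0.

Lemma correct_oracle_fp (P Q : finType) (emb : P -> option Q) (F : nat -> {set P}) p c :
  emb p = Some c -> correct (oracle_fp emb F) c -> correct F p.
Proof.
move=> Ec Cc t; apply/negP => Fp; case/negP: (Cc t).
by rewrite inE; apply/orP; left; apply/existsP; exists p; rewrite Ec eqxx.
Qed.

Section Admissible.
Variables (P Q : finType) (A : algo P) (V : P -> bool) (who : nat -> option P)
  (allowed : nat -> P -> P -> bool) (resp : nat -> bool)
  (emb : P -> option Q) (f2 : nat) (F : nat -> {set P}) (q0 : P).

Let S := sch A V who allowed resp.

Hypothesis who_alive : forall u r, who u = Some r -> r \notin F u.
Hypothesis who_fair : forall r, correct F r -> forall N, exists u, N <= u /\ who u = Some r.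
Hypothesis allowed_fair : forall r snd x N, correct F r -> (exists t, who t = Some snd) ->
  exists u, [/\ N <= u, slot u = x, who u = Some r & allowed u snd r].
Hypothesis resp_only_q0 : forall u, resp u -> who u = Some q0 /\ emb q0 != None.
Hypothesis resp_fair : forall k, quorum_queried emb f2 V S k ->
  forall p c b t0, emb p = Some c -> queries_in V S p k b t0 ->
  correct (oracle_fp emb F) c ->
  forall x N, exists u, [/\ N <= u, slot u = x, who u = Some p & resp u].

Lemma sch_channels : exists mt : nat -> nat * nat,
  (forall t p q m, S t = Some (p, In_msg q m) ->
     (mt t).1 < t /\ sent V S (mt t).1 (mt t).2 = Some (q, (p, m))) /\
  (forall t1 t2 p1 p2 q1 q2 m1 m2,
     S t1 = Some (p1, In_msg q1 m1) -> S t2 = Some (p2, In_msg q2 m2) ->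
     mt t1 = mt t2 -> t1 = t2) /\
  (forall t0 j q p m, sent V S t0 j = Some (q, (p, m)) -> correct F p ->
     exists t, S t = Some (p, In_msg q m) /\ mt t = (t0, j)).
Proof.
exists (fun t => ((slot t).1, (slot t).2.-1)); split; [|split].
- by move=> t p q m /sch_msg [t0 [j [-> lt Hs _ _]]].
- move=> t1 t2 p1 p2 q1 q2 m1 m2 /sch_msg [a [j [-> lta Ha Qa Na]]]
    /sch_msg [b [k [-> ltb Hb Qb Nb]]] [eab ejk]; subst b k.
  move: Hb; rewrite Ha => -[eq eq' _]; subst q2 p2.
  exact: none_between_uniq lta ltb Qa Qb Na Nb.
- move=> t0 j q p m Hs Cp.
  have stepped : exists t, who t = Some q.
    by case: (sent_step Hs) => i /sch_who; exists t0.
  have [u [le Es Ew al]] := allowed_fair (t0, j.+1) t0.+1 Cp stepped.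
  case: (sch_deliver Hs) => [|t [St Es']]; last by exists t; rewrite Es'.
  by exists u; split=> //; rewrite /msg_slot Es Ew !eqxx al.
Qed.

(* The oracle answers the [k]-th consultation with [q0]'s own [k]-th query,
   which is valid for consensus since [q0] is a consultant. *)
Let od (k : nat) : bool :=
  epsilon (inhabits false) (fun b => exists t0, queries_in V S q0 k b t0).

Let rc (t : nat) : nat := nqueries V S q0 (slot t).1.

Lemma sch_resp_q0 t p d : S t = Some (p, In_resp d) ->
  exists t0, [/\ p = q0, slot t = (t0, 0), t0 < t, queries_in V S q0 (rc t) d t0
                & d = od (rc t)].
Proof.
move=> /sch_resp [t0 [Es lt Hq Qr _]]; move: (Qr) => /and3P [_ /eqP Ew rs].
case: (resp_only_q0 rs); rewrite Ew => -[Ep] _; subst p.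
have Qi : queries_in V S q0 (rc t) d t0 by rewrite /rc Es.
exists t0; split=> //.
have [t0' Qi'] := epsilon_spec (inhabits false)
  (fun b => exists t0, queries_in V S q0 (rc t) b t0) (ex_intro _ d (ex_intro _ t0 Qi)).
have e := queries_in_uniq Qi Qi'; subst t0'.
by move: Qi' => [+ _]; rewrite (proj1 Qi) => -[].
Qed.

Lemma sch_oracle : exists (rc : nat -> nat) (od : nat -> bool),
  (forall t p d, S t = Some (p, In_resp d) ->
     [/\ d = od (rc t),
         exists c, emb p = Some c,
         (exists t0 b, t0 < t /\ queries_in V S p (rc t) b t0) &
         (forall W : Q -> bool,
            (forall t0 p' c b, t0 < t -> emb p' = Some c ->
               queries_in V S p' (rc t) b t0 -> W c = b) ->
            ConsPb (oracle_fp emb F) W (od (rc t)))]) /\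
  (forall t1 t2 p d1 d2, S t1 = Some (p, In_resp d1) ->
     S t2 = Some (p, In_resp d2) -> rc t1 = rc t2 -> t1 = t2) /\
  (forall k, quorum_queried emb f2 V S k ->
     forall p c b t0, emb p = Some c -> queries_in V S p k b t0 ->
       correct (oracle_fp emb F) c ->
       exists t d, S t = Some (p, In_resp d) /\ rc t = k).
Proof.
exists rc, od; split; [|split].
- move=> t p d St; have [t0 [-> _ lt Qi Ed]] := sch_resp_q0 St.
  move: St => /sch_resp [? [_ _ _ /and3P [_ /eqP Ew rs] _]].
  have [c Ec] : exists c, emb q0 = Some c
    by case: (resp_only_q0 rs) => _; case: (emb q0) => [c _|]; [exists c | rewrite eqxx].
  split; [done | by exists c | by exists t0, d |].
  by move=> W HW v Wv; rewrite -Ed -(Wv c) (HW t0 q0 c _ lt Ec Qi).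
- move=> t1 t2 p d1 d2 S1 S2 Erc.
  have [a [_ Ea lta Qa _]] := sch_resp_q0 S1; have [b [_ Eb ltb Qb _]] := sch_resp_q0 S2.
  rewrite Erc in Qa; have eab := queries_in_uniq Qa Qb; subst b.
  move: S1 S2 => /sch_resp [? [Ea' _ _ Ra Na]] /sch_resp [? [Eb' _ _ Rb Nb]].
  move: Ea' Eb' Ra Rb Na Nb; rewrite Ea Eb => -[<-] [<-].
  exact: none_between_uniq lta ltb.
- move=> k HS p c b t0 Ec Qi Cc.
  have [u [le Es Ew rs]] := resp_fair HS Ec Qi Cc (t0, 0) t0.+1.
  case: (sch_respond (proj1 Qi)) => [|t [St Es']].
    by exists u; split=> //; rewrite /resp_slot Es Ew !eqxx rs.
  have [] := resp_only_q0 rs; rewrite Ew => -[Ep] _; subst p.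
  by exists t, b; split=> //; rewrite /rc Es' (proj2 Qi).
Qed.

Lemma sch_admissible : failure_pattern F -> admissible emb (@ConsPb Q) f2 F V S.
Proof.
move=> fpF; split=> //; split; first by move=> t p i /sch_who /who_alive.
split; last by split; [exact: sch_channels | exact: sch_oracle].
move=> p Cp t; have [u [le Ew]] := who_fair Cp t.
by have [i Si] := who_sch A V allowed resp Ew; exists u, i.
Qed.

End Admissible.

Lemma no_quorum_solo (P Q : finType) (A : algo P) (V : P -> bool) (who : nat -> option P)
  (allowed : nat -> P -> P -> bool) (resp : nat -> bool) (emb : P -> option Q)
  (f2 : nat) (r0 : P) k :
  (forall u r, who u = Some r -> r = r0) -> 2 <= #|Q| - f2 ->
  ~ quorum_queried emb f2 V (sch A V who allowed resp) k.
Proof.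
move=> only_r0 card_Q [C [card_C queried]].
have sub : C \subset [set c | emb r0 == Some c].
  apply/subsetP => c /queried [p [b [t0 [Ec [Hq _]]]]].
  by case: (query_step Hq) => i /sch_who /only_r0 Ep; rewrite inE -Ep Ec.
have : #|[set c | emb r0 == Some c]| <= 1.
  case: (emb r0) => [c0|].
    by rewrite (_ : [set c | _] = [set c0]) ?cards1 //; apply/setP => c; rewrite !inE eq_sym.
  by rewrite (_ : [set c | _] = set0) ?cards0 //; apply/setP => c; rewrite !inE.
by have := subset_leq_card sub; lia.
Qed.

(** * The impossibility *)

Section Impossibility.
Variables (P Q : finType) (f : nat) (emb : P -> option Q) (A : algo P).
Hypothesis card_P : #|P| <= f.+1.
Hypothesis card_Q : 2 <= #|Q| - f.
Hypothesis A_solves : solves_with_oracle A (@ConsPb P) f emb (@ConsPb Q) f.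

Lemma at_most_faulty_correct (r : P) (F : nat -> {set P}) :
  correct F r -> at_most_faulty F f.
Proof.
move=> Fr; exists [set~ r]; split; first by rewrite cardsC1; lia.
by move=> t p Fp; rewrite !inE; apply: contraNneq (Fr t) => <-.
Qed.

Section Solo.
Variables (r : P) (b : bool) (T0 : nat).

Definition solo_who (u : nat) : option P := if u < T0 then None else Some r.

(* [r] runs alone with input [b] from time [T0] on, all other processes being
   crashed from the start. *)
Definition solo_sch : schedule A :=
  sch A (fun _ => b) solo_who (fun _ snd rcv => snd == rcv) (fun _ => false).

Lemma solo_who_r u p : solo_who u = Some p -> p = r.
Proof. by rewrite /solo_who; case: ifP => // _ [<-]. Qed.

Lemma solo_admissible :
  admissible emb (@ConsPb Q) f (fun _ => [set~ r]) (fun _ => b) solo_sch.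
Proof.
have only_r p : correct (fun _ => [set~ r]) p -> p = r.
  by move=> /(_ 0); rewrite !inE negbK => /eqP.
have late u : maxn u T0 < T0 = false by rewrite ltnNge leq_maxr.
apply: (sch_admissible (q0 := r)).
- by move=> u p /solo_who_r ->; rewrite !inE eqxx.
- by move=> p /only_r -> N; exists (maxn N T0); rewrite leq_maxl /solo_who late.
- move=> p snd x N /only_r -> [t /solo_who_r ->].
  have [u [le <-]] := slot_infinitely_often x (maxn N T0).
  exists u; split=> //; first by apply: leq_trans le; apply: leq_maxl.
  by rewrite /solo_who ltnNge (leq_trans (leq_maxr N T0) le).
- by [].
- by move=> k /no_quorum_solo-/(_ r solo_who_r card_Q).
- by move=> t t' _; rewrite subxx.
Qed.

Lemma solo_decides : exists T, T0 <= T /\ a_dec A (cfg (fun _ => b) solo_sch T r) = Some b.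
Proof.
have Cr : correct (fun _ => [set~ r]) r by move=> t; rewrite !inE eqxx.
have [decides irrevocable _ valid] := A_solves (at_most_faulty_correct Cr) solo_admissible.
have [T [v Dv]] := decides r Cr.
have Ev : v = b by apply: (valid _ _ _ Dv).
subst v.
by exists (maxn T T0); split; [exact: leq_maxr | apply: irrevocable Dv; exact: leq_maxl].
Qed.

End Solo.

Section Glued.
Variables (p q : P) (T1 T2 : nat).
Hypotheses (pq : p != q) (T12 : T1 <= T2).

Definition glued_who (u : nat) : option P := if u < T1 then Some p else Some q.

(* [p] runs alone with input 1 until [T1] and crashes; then [q] runs alone
   with input 0, and nothing reaches [q] from [p] or from the oracle before
   [T2]. *)
Definition glued_sch : schedule A :=
  sch A (fun x => x == p) glued_who (fun u snd rcv => (snd == rcv) || (T2 <= u))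
    (fun u => (T2 <= u) && (emb q != None)).

Definition glued_fp (t : nat) : {set P} :=
  [set x | (x != q) && ((x != p) || (T1 <= t))].

Lemma correct_glued_fp r : correct glued_fp r -> r = q.
Proof. by move=> /(_ T1); rewrite !inE leqnn orbT andbT negbK => /eqP. Qed.

Lemma glued_admissible :
  admissible emb (@ConsPb Q) f glued_fp (fun x => x == p) glued_sch.
Proof.
have late N : (maxn N T2 < T1) = false.
  by rewrite ltnNge (leq_trans T12) ?leq_maxr.
have late_slot x N : exists u, [/\ N <= u, slot u = x, glued_who u = Some q & T2 <= u].
  have [u [le <-]] := slot_infinitely_often x (maxn N T2).
  exists u; split=> //; first by apply: leq_trans le; apply: leq_maxl.
    by rewrite /glued_who ltnNge (leq_trans T12) // (leq_trans (leq_maxr N T2) le).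
  exact: leq_trans (leq_maxr N T2) le.
apply: (sch_admissible (q0 := q)).
- move=> u r; rewrite /glued_who; case: ifP => lt [<-]; rewrite !inE ?eqxx //.
  by rewrite pq /= leqNgt lt.
- move=> r /correct_glued_fp -> N; exists (maxn N T2).
  by rewrite /glued_who late leq_maxl.
- move=> r snd x N /correct_glued_fp -> _; have [u [le Es Ew T2u]] := late_slot x N.
  by exists u; split=> //; rewrite T2u orbT.
- move=> u /andP [T2u emb_q]; split=> //.
  by rewrite /glued_who ltnNge (leq_trans T12 T2u).
- move=> k _ r c b t0 Ec _ /(correct_oracle_fp Ec) /correct_glued_fp Er x N; subst r.
  have [u [le Es Ew T2u]] := late_slot x N.
  by exists u; split=> //; rewrite T2u Ec.
- move=> t t' le; apply/subsetP => x; rewrite !inE => /andP [-> /orP [->|le']] //.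
  by rewrite (leq_trans le' le) orbT.
Qed.

Lemma glued_p_as_solo :
  cfg (fun x => x == p) glued_sch T1 p = cfg (fun _ => true) (solo_sch p true 0) T1 p.
Proof.
apply: sch_cfg_eq; first by rewrite eqxx.
- by move=> u lt; rewrite /glued_who /solo_who lt.
- by move=> u snd lt _; rewrite leqNgt (leq_trans lt T12) orbF.
- by [].
- by move=> u lt; rewrite leqNgt (leq_trans lt T12).
Qed.

Lemma glued_q_as_solo :
  cfg (fun x => x == p) glued_sch T2 q = cfg (fun _ => false) (solo_sch q false T1) T2 q.
Proof.
apply: sch_cfg_eq; first by rewrite eq_sym (negbTE pq).
- move=> u lt; rewrite /glued_who /solo_who.
  by case: (u < T1); rewrite ?(inj_eq Some_inj) ?(negbTE pq).
- by move=> u snd lt; rewrite leqNgt lt orbF.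
- by [].
- by move=> u lt; rewrite leqNgt lt.
Qed.

End Glued.

Lemma two_processes_disagree (p q : P) : p != q -> False.
Proof.
move=> pq.
have [T1 [_ D1]] := solo_decides p true 0.
have [T2 [T12 D2]] := solo_decides q false T1.
have Cq : correct (glued_fp p q T1) q by move=> t; rewrite !inE eqxx.
have [_ _ agree _] := A_solves (at_most_faulty_correct Cq) (glued_admissible pq T12).
rewrite -(@glued_p_as_solo p q T1 T2 T12) in D1.
rewrite -(@glued_q_as_solo p q T1 T2 pq) in D2.
by have := agree _ _ _ _ _ _ D1 D2.
Qed.

End Impossibility.

Lemma consensus_not_solvable_with_oracle (P Q : finType) (f : nat)
  (emb : P -> option Q) (A : algo P) :
  1 < #|P| <= f.+1 -> 2 <= #|Q| - f ->
  ~ solves_with_oracle A (@ConsPb P) f emb (@ConsPb Q) f.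
Proof.
move=> /andP [/card_gt1P [p [q [_ _ pq]]] card_P] card_Q A_solves.
exact: (two_processes_disagree card_P card_Q A_solves pq).
Qed.

Theorem mainTheorem17 (n f : nat) :
  1 <= f -> f <= n - 2 ->
  ~ C_reducible (@ConsPb 'I_(f + 1)) f (@ConsPb 'I_n) f.
Proof.
move=> f_ge1 f_le [emb [_ [A A_solves]]].
by apply: consensus_not_solvable_with_oracle A_solves; rewrite !card_ord; lia.
Qed.
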